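(* Let $A,B$ be strongly regular graphs with the same parameters $\sigma(A)=(n,d,\lambda,\mu)$, and let $A',B'$ be partially colored versions with port vertices $a_1,\dots,a_m$, $b_1,\dots,b_m$ as in the construction, such that $\tau(a_i)=\tau(b_i)$ for all $i$. Then for vertices $x,y$ of $G(A',B')$, the sequence $(w_k(x,y))_{k\ge0}$ is determined solely by $\eta(x,y)$, $\tau(A')$ and $\sigma(A)$: if $(\hat A',\hat B')$ is another such pair with $\sigma(\hat A)=\sigma(A)$ and $\tau(\hat A')=\tau(A')$, and $x,y\in V(G(A',B'))$, $\hat x,\hat y\in V(G(\hat A',\hat B'))$ satisfy $\eta(x,y)=\eta(\hat x,\hat y)$, then $w_k(x,y)=w_k(\hat x,\hat y)$ for all $k\ge0$.
   Context: Graphs are finite, simple and undirected. A strongly regular graph with parameters $(n,d,\lambda,\mu)$ is an $n$-vertex $d$-regular graph in which any two adjacent vertices have $\lambda$ common neighbours and any two distinct non-adjacent vertices have $\mu$ common neighbours. $A'$ (resp. $B'$) is $A$ (resp. $B$) with $a_i$ (resp. $b_i$) colored $i$ for $i=1,\dots,m$ and all other vertices uncolored. Construction $G(A',B')$ (uncolored): the vertex-disjoint union of $A$ and $B$, plus for each $i$ a connecting vertex $c_i$ adjacent to $a_i$ and $b_i$ and $i$ pendant vertices $p_{i,1},\dots,p_{i,i}$ adjacent only to $c_i$. $w_k(x,y)$ is the number of walks of length $k$ from $x$ to $y$ in $G(A',B')$. Color refinement on a vertex-colored graph $X$: $C^0_X(x)$ is the color of $x$ (common default for uncolored vertices), $C^{1}_X(x)=\big(C^0_X(x),\{\!\{C^0_X(y)\}\!\}_{y\in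 N(x)}\big)$. Types: $\tau(x)=C^1_{A'}(x)$ for $x\in V(A)$, $\tau(x)=C^1_{B'}(x)$ for $x\in V(B)$, $\tau(c_i)=(\mathfrak c,\tau(a_i))$, $\tau(p_{i,h})=(\mathfrak p,\tau(a_i))$ for special symbols $\mathfrak c,\mathfrak p$. $\tau(A')=(\tau(a_1),\dots,\tau(a_m))$. $D(x,y)=1$ iff $x,y$ both lie in the $A$-part or both in the $B$-part, else $0$; $I(x,y)=1$ iff $x=y$; $A(x,y)=1$ iff $x,y$ adjacent. $\eta(x,y)=(\tau(x),D(x,y),I(x,y),A(x,y),\tau(y))$. *)

From mathcomp Require Import all_boot.
Set Implicit Arguments. Unset Strict Implicit. Unset Printing Implicit Defensive.

Definition srg (V : finType) (e : rel V) (n d lam mu : nat) : Prop :=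
  [/\ symmetric e, irreflexive e & #|V| = n] /\
  [/\ (forall x, #|[pred y | e x y]| = d),
      (forall x y, x != y -> e x y -> #|[pred z | e x z && e y z]| = lam)
    & (forall x y, x != y -> ~~ e x y -> #|[pred z | e x z && e y z]| = mu)].

(* Colour of a vertex in the partially coloured graph A': port p i (i : 'I_m)
   gets colour Some i (standing for colour i+1), all other vertices None. *)
Definition pcol (V : finType) (m : nat) (p : 'I_m -> V) (x : V) : option 'I_m :=
  [pick i | p i == x].

(* C^1 colour: own colour, and the multiset of neighbour colours, the latter
   represented by its multiplicity function. *)
Definition ctype (m : nat) := (option 'I_m * {ffun option 'I_m -> nat})%type.

Definition tau1 (V : finType) (m : nat) (e : rel V) (p : 'I_m -> V) (x : V)
  : ctype m :=
  (pcol p x, [ffun c => #|[pred y | e x y && (pcol p y == c)]|]).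

(* types of vertices of G(A',B'): graph vertices, connecting vertices
   (symbol frak c), pendant vertices (symbol frak p). *)
Inductive vtype (m : nat) : Type :=
| TG of ctype m
| TC of ctype m
| TP of ctype m.

(* Vertex set of G(A',B'):  V(A) + V(B) + {c_i} + {p_(i,h)}.
   Index i : 'I_m stands for the colour i+1; c_i has i+1 pendants
   indexed by h : 'I_(i+1). *)
Definition gvert (VA VB : finType) (m : nat) : finType :=
  ((VA + VB) + 'I_m + {i : 'I_m & 'I_(i.+1)})%type.

Section G.
Variables (VA VB : finType) (m : nat) (eA : rel VA) (eB : rel VB)
          (pa : 'I_m -> VA) (pb : 'I_m -> VB).

Definition gadj : rel (gvert VA VB m) := fun u v =>
  match u, v with
  | inl (inl (inl a)), inl (inl (inl a')) => eA a a'
  | inl (inl (inr b)), inl (inl (inr b')) => eB b b'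
  | inl (inl (inl a)), inl (inr i) | inl (inr i), inl (inl (inl a)) => a == pa i
  | inl (inl (inr b)), inl (inr i) | inl (inr i), inl (inl (inr b)) => b == pb i
  | inl (inr i), inr (existT j _) | inr (existT j _), inl (inr i) => i == j
  | _, _ => false
  end.

Definition gtau (v : gvert VA VB m) : vtype m :=
  match v with
  | inl (inl (inl a)) => TG (tau1 eA pa a)
  | inl (inl (inr b)) => TG (tau1 eB pb b)
  | inl (inr i) => TC (tau1 eA pa (pa i))
  | inr (existT i _) => TP (tau1 eA pa (pa i))
  end.
End G.

Definition Dpart (VA VB : finType) (m : nat) (u v : gvert VA VB m) : bool :=
  match u, v with
  | inl (inl (inl _)), inl (inl (inl _)) => true
  | inl (inl (inr _)), inl (inl (inr _)) => true
  | _, _ => false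
  end.

Definition nwalks (V : finType) (e : rel V) (k : nat) (x y : V) : nat :=
  #|[pred s : k.-tuple V | path e x s && (last x s == y)]|.

From mathcomp Require Import all_boot ssralg ssrint.
Set Implicit Arguments. Unset Strict Implicit. Unset Printing Implicit Defensive.
Import GRing.Theory.
Local Open Scope ring_scope.

(* Fix y.  The functions x |-> w_k(x,y) all lie in the integer span of finitely
   many indicator functions [chi y s]: of the ports a_i, b_i, of their
   neighbourhoods inside A and B, of V(A) and V(B), of the c_i, of the pendants
   of c_i, of y, and of the neighbours of y inside its own part.  Indeed the
   adjacency operator maps each [chi y s] to an integer combination
   [adj_comb y s] of them; for the neighbourhood indicators this is the
   strongly regular identity A^2 = (d - mu) I + (lam - mu) A + mu J.  The
   coefficients only involve (d, lam, mu), the adjacencies among the ports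
   (read off tau(A')) and those between y and the ports (read off tau(y)),
   while [chi y s x] is determined by eta(x, y).  So w_k(x,y), the value at x
   of the k-th iterate applied to the indicator of y, is determined as well.
   The only catch is that eta does not record in which of A, B a graph vertex
   lies; since it records D(x,y), either x, y lie on corresponding sides in
   both constructions or both on exchanged sides, and the isomorphism
   G(A',B') ~ G(B',A') reduces the second case to the first. *)

Definition iverson (b : bool) : int := (b : nat)%:Z.

Lemma iversonT : iverson true = 1. Proof. by []. Qed.
Lemma iversonF : iverson false = 0. Proof. by []. Qed.

Lemma iverson_and a b : iverson (a && b) = iverson a * iverson b.
Proof. by case: a; case: b. Qed.

Lemma sum_iverson_eq (T : finType) (t0 : T) (F : T -> int) :
  \sum_t iverson (t == t0) * F t = F t0.
Proof.
rewrite (bigD1 t0) //= eqxx mul1r big1 ?addr0 // => t /negbTE ->; exact: mul0r.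
Qed.

Lemma sum_mul_iverson_eq (T : finType) (t0 : T) (F : T -> int) :
  \sum_t F t * iverson (t == t0) = F t0.
Proof. by rewrite -[RHS]sum_iverson_eq; apply: eq_bigr => t _; rewrite mulrC. Qed.

Lemma sum_mul0 (T : finType) (F : T -> int) : \sum_t F t * 0 = 0.
Proof. by rewrite big1 // => t _; rewrite mulr0. Qed.

Lemma sum_enum (T : finType) (F : T -> int) : \sum_(t <- enum T) F t = \sum_t F t.
Proof. by rewrite big_enum. Qed.

Lemma sum_iverson_Tagged (I : finType) (T_ : I -> finType) (j : I) (u : {i : I & T_ i}) :
  \sum_(h : T_ j) iverson (Tagged T_ h == u) = iverson (j == tag u).
Proof.
have [->|neq] := eqVneq j (tag u); last first.
  by rewrite big1 // => h _; case: eqP => // eq_hu; rewrite -eq_hu /= eqxx in neq.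
under eq_bigr do rewrite eq_sym eq_Tagged.
rewrite (bigD1 (tagged u)) //= eqxx big1 ?addr0 // => h.
by rewrite eq_sym => /negbTE ->.
Qed.

Lemma card_iverson (T : finType) (P : pred T) : #|P|%:Z = \sum_t iverson (P t).
Proof.
rewrite -sum1_card (big_morph Posz PoszD (erefl 0%:Z)) big_mkcond /=.
by apply: eq_bigr => t _; rewrite unfold_in; case: (P t).
Qed.

Lemma card_sum_nat (T : finType) (P : pred T) : #|P| = (\sum_t P t)%N.
Proof.
by rewrite -sum1_card big_mkcond; apply: eq_bigr => t _; rewrite unfold_in; case: (P t).
Qed.

Section Walks.
Variables (V : finType) (e : rel V).

Lemma nwalks0 x y : nwalks e 0 x y = (x == y).
Proof.
by rewrite /nwalks card_sum_nat (big_pred1 [tuple]) // => t; rewrite [t]tuple0.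
Qed.

Lemma nwalksS k x y : nwalks e k.+1 x y = (\sum_z e x z * nwalks e k z y)%N.
Proof.
rewrite /nwalks card_sum_nat.
rewrite (reindex (fun p : V * k.-tuple V => [tuple of p.1 :: p.2])) /=; last first.
  exists (fun s : k.+1.-tuple V => (thead s, [tuple of behead s])).
    by move=> [z t] _; congr pair; apply: val_inj.
  by move=> s _; apply: val_inj => /=; case: s => [[|z t]].
rewrite -(pair_bigA _ (fun z (t : k.-tuple V) => (e x z && path e z t && (last z t == y) : nat))).
apply: eq_bigr => z _ /=; rewrite card_sum_nat big_distrr /=; apply: eq_bigr => t _.
by case: (e x z); case: (path e z t && _).
Qed.

Lemma nwalksS_int k x y :
  (nwalks e k.+1 x y)%:Z = \sum_z iverson (e x z) * (nwalks e k z y)%:Z.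
Proof. by rewrite nwalksS (big_morph Posz PoszD (erefl 0%:Z)); under eq_bigr do rewrite PoszM. Qed.

End Walks.

Lemma nwalks_bij (V V2 : finType) (e : rel V) (e2 : rel V2) (f : V -> V2) :
  bijective f -> (forall u v, e2 (f u) (f v) = e u v) ->
  forall k x y, nwalks e2 k (f x) (f y) = nwalks e k x y.
Proof.
move=> bf he; elim=> [|k IH] x y; first by rewrite !nwalks0 (inj_eq (bij_inj bf)).
rewrite !nwalksS (reindex f) /=; last exact: onW_bij.
by apply: eq_bigr => z _; rewrite he IH.
Qed.

Lemma srg_sym (V : finType) (e : rel V) n d lam mu : srg e n d lam mu -> symmetric e.
Proof. by case=> -[]. Qed.

Section StronglyRegular.
Variables (V : finType) (e : rel V) (n d lam mu : nat).
Hypothesis srgV : srg e n d lam mu.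

Lemma srg_sum_adj a : \sum_z iverson (e a z) = d%:Z.
Proof. by case: srgV => _ [deg _ _]; rewrite -(deg a) card_iverson. Qed.

Lemma srg_sum_common a u :
  \sum_z iverson (e a z) * iverson (e u z) =
  (d%:Z - mu%:Z) * iverson (a == u) + (lam%:Z - mu%:Z) * iverson (e u a) + mu%:Z.
Proof.
case: srgV => -[sym irr _] [deg adj_lam nadj_mu].
under eq_bigr do rewrite -iverson_and.
rewrite -(card_iverson [pred z | e a z && e u z]).
have [<-|neq] := eqVneq a u.
  rewrite (eq_card (B := e a)) ?deg => [|z]; last by rewrite !inE andbb.
  by rewrite irr /= mulr1 mulr0 addr0 subrK.
case eua: (e u a); first by rewrite adj_lam 1?sym //= mulr0 mulr1 add0r subrK.
by rewrite nadj_mu 1?sym ?eua //= !mulr0 !add0r.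
Qed.
End StronglyRegular.

Section PortColours.
Variables (V : finType) (m : nat) (e : rel V) (p : 'I_m -> V).
Hypothesis p_inj : injective p.

Lemma pcolE y j : (pcol p y == Some j) = (p j == y).
Proof.
rewrite /pcol; case: pickP => [i /eqP <- | /(_ j) ->] //.
by rewrite (inj_eq p_inj) eq_sym.
Qed.

Lemma pcol_port j : pcol p (p j) = Some j.
Proof. by apply/eqP; rewrite pcolE. Qed.

Lemma tau1_port_adj x j : (tau1 e p x).2 (Some j) = e x (p j).
Proof.
rewrite ffunE card_sum_nat (bigD1 (p j)) //= pcolE eqxx andbT big1 ?addn0 // => y.
by rewrite pcolE eq_sym => /negbTE ->; rewrite andbF.
Qed.
End PortColours.

Lemma tau1_eq_port_adj (V V2 : finType) m (e : rel V) (e2 : rel V2)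
    (p : 'I_m -> V) (p2 : 'I_m -> V2) u u2 :
  injective p -> injective p2 -> tau1 e p u = tau1 e2 p2 u2 ->
  forall j, e u (p j) = e2 u2 (p2 j).
Proof.
move=> p_inj p2_inj eq_tau j.
move: (congr1 (fun t : ctype m => t.2 (Some j)) eq_tau).
by rewrite /= !tau1_port_adj //; case: (e _ _); case: (e2 _ _).
Qed.

Lemma tau1_eq_port_eq (V V2 : finType) m (e : rel V) (e2 : rel V2)
    (p : 'I_m -> V) (p2 : 'I_m -> V2) u u2 :
  injective p -> injective p2 -> tau1 e p u = tau1 e2 p2 u2 ->
  forall j, (u == p j) = (u2 == p2 j).
Proof.
move=> p_inj p2_inj /(congr1 fst) /= eq_pcol j.
by rewrite eq_sym -(pcolE p_inj) eq_pcol pcolE // eq_sym.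
Qed.

Lemma tau1_eq_port_inj (V V2 : finType) m (e : rel V) (e2 : rel V2)
    (p : 'I_m -> V) (p2 : 'I_m -> V2) i j :
  injective p -> injective p2 -> tau1 e p (p i) = tau1 e2 p2 (p2 j) -> i = j.
Proof. by move=> p_inj p2_inj /(congr1 fst) /=; rewrite !pcol_port // => -[]. Qed.

Notation vA a := (inl (inl (inl a))).
Notation vB b := (inl (inl (inr b))).
Notation vC i := (inl (inr i)).
Notation vP i h := (inr (existT (fun k : ordinal _ => 'I_k.+1) i h)).

(* The boolean argument selects the part: [false] for A, [true] for B. *)
Inductive sym (m : nat) : Type :=
| Port of bool & 'I_m
| PortNbrs of bool & 'I_m
| Side of bool
| Conn of 'I_m
| Pend of 'I_m
| Target
| TargetNbrs.
Arguments Side {m}. Arguments Target {m}. Arguments TargetNbrs {m}.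

Section Construction.
Variables (VA VB : finType) (m : nat) (eA : rel VA) (eB : rel VB)
          (pa : 'I_m -> VA) (pb : 'I_m -> VB).
Notation V := (gvert VA VB m).
Notation G := (gadj eA eB pa pb).

Lemma sum_gvert (F : V -> int) : \sum_z F z =
  \sum_a F (vA a) + \sum_b F (vB b) + \sum_i F (vC i) +
  \sum_(i : 'I_m) \sum_(h : 'I_i.+1) F (vP i h).
Proof.
rewrite !big_sumType /= (sig_big_dep _ _ (fun (i : 'I_m) (h : 'I_i.+1) => F (vP i h))) /=.
by congr (_ + _); apply: eq_bigr => -[i h].
Qed.

Definition nbr_sum (f : V -> int) (x : V) : int :=
  match x with
  | vA a => \sum_a' iverson (eA a a') * f (vA a') + \sum_i iverson (a == pa i) * f (vC i)
  | vB b => \sum_b' iverson (eB b b') * f (vB b') + \sum_i iverson (b == pb i) * f (vC i)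
  | vC i => f (vA (pa i)) + f (vB (pb i)) + \sum_(h : 'I_i.+1) f (vP i h)
  | inr (existT i _) => f (vC i)
  end.

Lemma sum_gadj (f : V -> int) x : \sum_z iverson (G x z) * f z = nbr_sum f x.
Proof.
have sum0 (T : finType) (F : T -> int) : \sum_t iverson false * F t = 0.
  by rewrite big1 // => t _; rewrite mul0r.
have sum00 (F : forall i : 'I_m, 'I_i.+1 -> int) :
    \sum_(i : 'I_m) \sum_(h : 'I_i.+1) iverson false * F i h = 0.
  by rewrite big1 // => i _; rewrite sum0.
rewrite sum_gvert; case: x => [[[a|b]|i]|[i h]] /=;
  rewrite ?sum0 ?sum00 ?addr0 ?add0r ?sum_iverson_eq //.
rewrite (bigD1 i) //= eqxx [\sum_(j | j != i) _]big1 ?addr0 => [|j /negbTE ji].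
  by under eq_bigr do rewrite mul1r.
by rewrite big1 // => h _; rewrite eq_sym ji mul0r.
Qed.

Definition chi (y : V) (s : sym m) (x : V) : int :=
  match s, x with
  | Port false i, vA a => iverson (a == pa i)
  | Port true i, vB b => iverson (b == pb i)
  | PortNbrs false i, vA a => iverson (eA (pa i) a)
  | PortNbrs true i, vB b => iverson (eB (pb i) b)
  | Side false, vA _ | Side true, vB _ => 1
  | Conn i, vC j => iverson (j == i)
  | Pend i, inr (existT j _) => iverson (j == i)
  | Target, _ =>
    match x, y with
    | vA a, vA u => iverson (a == u)
    | vB b, vB u => iverson (b == u)
    | vC i, vC j => iverson (i == j)
    | inr p, inr q => iverson (p == q)
    | _, _ => 0
    end
  | TargetNbrs, _ => iverson (Dpart y x && G y x)
  | _, _ => 0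
  end.

Definition eval_comb (y : V) (l : seq (int * sym m)) (x : V) : int :=
  \sum_(q <- l) q.1 * chi y q.2 x.

Lemma eval_comb_cons y c s l x :
  eval_comb y ((c, s) :: l) x = c * chi y s x + eval_comb y l x.
Proof. exact: big_cons. Qed.

Lemma eval_comb_nil y x : eval_comb y [::] x = 0.
Proof. exact: big_nil. Qed.

Lemma eval_comb_conn y (c : 'I_m -> int) x :
  eval_comb y [seq (c j, Conn j) | j <- enum 'I_m] x = if x is vC i then c i else 0.
Proof.
rewrite /eval_comb big_map sum_enum.
case: x => [[[a|b]|i]|[i h]] /=; last 2 first.
- by under eq_bigr do rewrite eq_sym; rewrite sum_mul_iverson_eq.
all: by rewrite big1 // => j _; rewrite mulr0.
Qed.

Variables (d lam mu : nat).

Definition conn_nbrs (i : 'I_m) : seq (int * sym m) :=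
  [:: (1, Port false i); (1, Port true i); (1, Pend i)].

Definition adj_comb (y : V) (s : sym m) : seq (int * sym m) :=
  match s with
  | Port b i => [:: (1, PortNbrs b i); (1, Conn i)]
  | PortNbrs b i =>
    (d%:Z - mu%:Z, Port b i) :: (lam%:Z - mu%:Z, PortNbrs b i) :: (mu%:Z, Side b) ::
    [seq (iverson (eA (pa i) (pa j)), Conn j) | j <- enum 'I_m]
  | Side b => (d%:Z, Side b) :: [seq (1, Conn j) | j <- enum 'I_m]
  | Conn i => conn_nbrs i
  | Pend i => [:: (i.+1%:Z, Conn i)]
  | Target =>
    match y with
    | vA a => (1, TargetNbrs) :: [seq (iverson (a == pa j), Conn j) | j <- enum 'I_m]
    | vB b => (1, TargetNbrs) :: [seq (iverson (b == pb j), Conn j) | j <- enum 'I_m]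
    | vC i => conn_nbrs i
    | inr (existT i _) => [:: (1, Conn i)]
    end
  | TargetNbrs =>
    match y with
    | vA a => (d%:Z - mu%:Z, Target) :: (lam%:Z - mu%:Z, TargetNbrs) :: (mu%:Z, Side false) ::
              [seq (iverson (eA a (pa j)), Conn j) | j <- enum 'I_m]
    | vB b => (d%:Z - mu%:Z, Target) :: (lam%:Z - mu%:Z, TargetNbrs) :: (mu%:Z, Side true) ::
              [seq (iverson (eB b (pb j)), Conn j) | j <- enum 'I_m]
    | _ => [::]
    end
  end.

Variable n : nat.
Hypotheses (srgA : srg eA n d lam mu) (srgB : srg eB n d lam mu).
Hypotheses (pa_inj : injective pa) (pb_inj : injective pb).
Hypothesis port_adj : forall i j, eB (pb i) (pb j) = eA (pa i) (pa j).
Let symA := srg_sym srgA.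
Let symB := srg_sym srgB.

Local Ltac simpl_sums :=
  rewrite ?sum_mul0 ?big1_eq ?mul1r ?mulr1 ?mulr0 ?addr0 ?add0r ?sum_mul_iverson_eq //.

Lemma nbr_sum_Port y b i x :
  nbr_sum (chi y (Port b i)) x = eval_comb y (adj_comb y (Port b i)) x.
Proof.
rewrite !eval_comb_cons eval_comb_nil.
case: b; case: x => [[[a|a]|j]|[j h]] /=;
  simpl_sums.
- by rewrite symB.
- by rewrite (inj_eq pb_inj) eq_sym.
- by rewrite symA.
- by rewrite (inj_eq pa_inj) eq_sym.
Qed.

Lemma nbr_sum_PortNbrs y b i x :
  nbr_sum (chi y (PortNbrs b i)) x = eval_comb y (adj_comb y (PortNbrs b i)) x.
Proof.
rewrite !eval_comb_cons eval_comb_conn.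
case: b; case: x => [[[a|a]|j]|[j h]] /=;
  simpl_sums.
- by rewrite addrA (srg_sum_common srgB).
- by rewrite port_adj.
- by rewrite addrA (srg_sum_common srgA).
Qed.

Lemma nbr_sum_Side y b x :
  nbr_sum (chi y (Side b)) x = eval_comb y (adj_comb y (Side b)) x.
Proof.
rewrite !eval_comb_cons eval_comb_conn.
case: b; case: x => [[[a|a]|j]|[j h]] /=;
  simpl_sums.
- by under eq_bigr do rewrite mulr1; rewrite (srg_sum_adj srgB).
- by under eq_bigr do rewrite mulr1; rewrite (srg_sum_adj srgA).
Qed.

Lemma nbr_sum_Conn y i x :
  nbr_sum (chi y (Conn i)) x = eval_comb y (adj_comb y (Conn i)) x.
Proof.
rewrite !eval_comb_cons eval_comb_nil.
case: x => [[[a|a]|j]|[j h]] /=;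
  simpl_sums.
Qed.

Lemma nbr_sum_Pend y i x :
  nbr_sum (chi y (Pend i)) x = eval_comb y (adj_comb y (Pend i)) x.
Proof.
rewrite !eval_comb_cons eval_comb_nil.
case: x => [[[a|a]|j]|[j h]] /=;
  simpl_sums.
have [->|_] := eqVneq j i; last by rewrite iversonF mulr0 big1.
by rewrite iversonT mulr1 sumr_const card_ord natz.
Qed.

Lemma nbr_sum_Target y x :
  nbr_sum (chi y Target) x = eval_comb y (adj_comb y Target) x.
Proof.
case: y => [[[u|u]|k]|[k hk]] /=; rewrite ?eval_comb_cons ?eval_comb_conn ?eval_comb_nil;
case: x => [[[a|a]|j]|[j h]] /=;
  simpl_sums.
- by rewrite symA.
- by rewrite eq_sym.
- by rewrite symB.
- by rewrite eq_sym.
- exact: sum_iverson_Tagged.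
Qed.

Lemma nbr_sum_TargetNbrs y x :
  nbr_sum (chi y TargetNbrs) x = eval_comb y (adj_comb y TargetNbrs) x.
Proof.
case: y => [[[u|u]|k]|[k hk]] /=; rewrite ?eval_comb_cons ?eval_comb_conn ?eval_comb_nil;
case: x => [[[a|a]|j]|[j h]] /=;
  simpl_sums.
- by rewrite addrA (srg_sum_common srgA).
- by rewrite addrA (srg_sum_common srgB).
Qed.

Lemma sum_gadj_chi y s x :
  \sum_z iverson (G x z) * chi y s z = eval_comb y (adj_comb y s) x.
Proof.
rewrite sum_gadj; case: s => [b i|b i|b|i|i||].
- exact: nbr_sum_Port.
- exact: nbr_sum_PortNbrs.
- exact: nbr_sum_Side.
- exact: nbr_sum_Conn.
- exact: nbr_sum_Pend.
- exact: nbr_sum_Target.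
- exact: nbr_sum_TargetNbrs.
Qed.

Definition adj_step (y : V) (l : seq (int * sym m)) : seq (int * sym m) :=
  flatten [seq [seq (q.1 * r.1, r.2) | r <- adj_comb y q.2] | q <- l].

Definition walk_comb (y : V) (k : nat) : seq (int * sym m) :=
  iter k (adj_step y) [:: (1, Target)].

Lemma sum_gadj_eval y l x :
  \sum_z iverson (G x z) * eval_comb y l z = eval_comb y (adj_step y l) x.
Proof.
rewrite [RHS]/eval_comb big_flatten big_map /=.
under eq_bigr do rewrite big_distrr.
rewrite exchange_big; apply: eq_bigr => -[c s] _ /=.
under eq_bigr do rewrite mulrCA.
rewrite -big_distrr sum_gadj_chi big_map big_distrr.
by apply: eq_bigr => r _; rewrite /= mulrA.
Qed.

Lemma chi_Target y x : chi y Target x = iverson (x == y).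
Proof. by case: x => [[[a|a]|i]|p]; case: y => [[[u|u]|j]|q]. Qed.

Lemma nwalks_eval y k x : (nwalks G k x y)%:Z = eval_comb y (walk_comb y k) x.
Proof.
elim: k x => [|k IH] x.
  by rewrite nwalks0 /walk_comb /= eval_comb_cons eval_comb_nil addr0 mul1r chi_Target.
by rewrite nwalksS_int; under eq_bigr do rewrite IH; rewrite sum_gadj_eval.
Qed.
End Construction.

(* Extracts tau1-equalities from gtau-equalities; injection would unfold [tau1]. *)
Definition vtype_ctype m (t : vtype m) : ctype m :=
  match t with TG c | TC c | TP c => c end.

Definition side (VA VB : finType) m (v : gvert VA VB m) : option bool :=
  match v with vA _ => Some false | vB _ => Some true | _ => None end.

Lemma Dpart_sym (VA VB : finType) m (u v : gvert VA VB m) : Dpart u v = Dpart v u.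
Proof. by case: u => [[[a|b]|i]|[i h]]; case: v => [[[a'|b']|j]|[j h']]. Qed.

Lemma gadj_sym (VA VB : finType) m eA eB (pa : 'I_m -> VA) (pb : 'I_m -> VB) :
  symmetric eA -> symmetric eB -> symmetric (gadj eA eB pa pb).
Proof.
move=> symA symB u v.
by case: u => [[[a|b]|i]|[i h]]; case: v => [[[a'|b']|j]|[j h']] //=; rewrite ?symA ?symB // eq_sym.
Qed.

Section Transfer.
Variables (d lam mu m : nat)
  (VA VB : finType) (eA : rel VA) (eB : rel VB) (pa : 'I_m -> VA) (pb : 'I_m -> VB)
  (VA2 VB2 : finType) (eA2 : rel VA2) (eB2 : rel VB2)
  (pa2 : 'I_m -> VA2) (pb2 : 'I_m -> VB2).
Hypotheses (symA : symmetric eA) (symB : symmetric eB)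
  (symA2 : symmetric eA2) (symB2 : symmetric eB2).
Hypotheses (pa_inj : injective pa) (pb_inj : injective pb)
  (pa2_inj : injective pa2) (pb2_inj : injective pb2).
Hypothesis tau_ports : forall i, tau1 eA pa (pa i) = tau1 eA2 pa2 (pa2 i).
Notation tau := (gtau eA eB pa pb).
Notation tau2 := (gtau eA2 eB2 pa2 pb2).

Lemma adj_comb_transfer y y2 : tau y = tau2 y2 -> side y = side y2 ->
  adj_comb eA eB pa pb d lam mu y =1 adj_comb eA2 eB2 pa2 pb2 d lam mu y2.
Proof.
move=> eq_tau eq_side [b i|b i|b|i|i||] //=.
- congr [:: _, _, _ & _]; apply: eq_map => j.
  by rewrite (tau1_eq_port_adj pa_inj pa2_inj (tau_ports i)).
- move: eq_tau eq_side.
  case: y => [[[u|u]|i]|[i h]]; case: y2 => [[[u2|u2]|i2]|[i2 h2]] //=;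
    move=> /(congr1 (@vtype_ctype m)) /= eq_tau _.
  + by congr (_ :: _); apply: eq_map => j; rewrite (tau1_eq_port_eq pa_inj pa2_inj eq_tau).
  + by congr (_ :: _); apply: eq_map => j; rewrite (tau1_eq_port_eq pb_inj pb2_inj eq_tau).
  + by rewrite (tau1_eq_port_inj pa_inj pa2_inj eq_tau).
  + by rewrite (tau1_eq_port_inj pa_inj pa2_inj eq_tau).
- move: eq_tau eq_side.
  case: y => [[[u|u]|i]|[i h]]; case: y2 => [[[u2|u2]|i2]|[i2 h2]] //=;
    move=> /(congr1 (@vtype_ctype m)) /= eq_tau _.
  + congr [:: _, _, _ & _]; apply: eq_map => j.
    by rewrite (tau1_eq_port_adj pa_inj pa2_inj eq_tau).
  + congr [:: _, _, _ & _]; apply: eq_map => j.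
    by rewrite (tau1_eq_port_adj pb_inj pb2_inj eq_tau).
Qed.

Lemma chi_transfer x y x2 y2 s :
  tau x = tau2 x2 -> side x = side x2 -> (x == y) = (x2 == y2) ->
  Dpart x y = Dpart x2 y2 -> gadj eA eB pa pb x y = gadj eA2 eB2 pa2 pb2 x2 y2 ->
  chi eA eB pa pb y s x = chi eA2 eB2 pa2 pb2 y2 s x2.
Proof.
move=> eq_tau eq_side eq_xy eq_D eq_adj.
case: s => [b i|b i|b|i|i||]; last first.
- rewrite /= Dpart_sym (Dpart_sym y2).
  by rewrite (gadj_sym pa pb symA symB) (gadj_sym pa2 pb2 symA2 symB2) eq_D eq_adj.
- by rewrite !chi_Target eq_xy.
all: move: eq_tau eq_side {eq_xy eq_D eq_adj}.
all: case: x => [[[a|a]|j]|[j h]]; case: x2 => [[[a2|a2]|j2]|[j2 h2]] //=.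
all: move=> /(congr1 (@vtype_ctype m)) /= eq_tau _.
- by rewrite (tau1_eq_port_inj pa_inj pa2_inj eq_tau).
- by rewrite (tau1_eq_port_inj pa_inj pa2_inj eq_tau).
- by rewrite symA symA2 (tau1_eq_port_adj pa_inj pa2_inj eq_tau).
- by rewrite symB symB2 (tau1_eq_port_adj pb_inj pb2_inj eq_tau).
- by rewrite (tau1_eq_port_eq pa_inj pa2_inj eq_tau).
- by rewrite (tau1_eq_port_eq pb_inj pb2_inj eq_tau).
Qed.

Lemma walk_comb_transfer y y2 k : tau y = tau2 y2 -> side y = side y2 ->
  walk_comb eA eB pa pb d lam mu y k = walk_comb eA2 eB2 pa2 pb2 d lam mu y2 k.
Proof.
move=> eq_tau eq_side; elim: k => //= k IH.
rewrite /adj_step IH; congr flatten; apply: eq_map => q.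
by rewrite (adj_comb_transfer eq_tau eq_side).
Qed.
End Transfer.

Lemma nwalks_transfer_aligned (n d lam mu m : nat)
  (VA VB : finType) (eA : rel VA) (eB : rel VB) (pa : 'I_m -> VA) (pb : 'I_m -> VB)
  (VA2 VB2 : finType) (eA2 : rel VA2) (eB2 : rel VB2)
  (pa2 : 'I_m -> VA2) (pb2 : 'I_m -> VB2) :
  srg eA n d lam mu -> srg eB n d lam mu -> srg eA2 n d lam mu -> srg eB2 n d lam mu ->
  injective pa -> injective pb -> injective pa2 -> injective pb2 ->
  (forall i, tau1 eA pa (pa i) = tau1 eB pb (pb i)) ->
  (forall i, tau1 eA2 pa2 (pa2 i) = tau1 eB2 pb2 (pb2 i)) ->
  (forall i, tau1 eA pa (pa i) = tau1 eA2 pa2 (pa2 i)) ->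
  forall (x y : gvert VA VB m) (x2 y2 : gvert VA2 VB2 m),
  gtau eA eB pa pb x = gtau eA2 eB2 pa2 pb2 x2 -> side x = side x2 ->
  gtau eA eB pa pb y = gtau eA2 eB2 pa2 pb2 y2 -> side y = side y2 ->
  Dpart x y = Dpart x2 y2 -> (x == y) = (x2 == y2) ->
  gadj eA eB pa pb x y = gadj eA2 eB2 pa2 pb2 x2 y2 ->
  forall k, nwalks (gadj eA eB pa pb) k x y = nwalks (gadj eA2 eB2 pa2 pb2) k x2 y2.
Proof.
move=> srgA srgB srgA2 srgB2 pa_inj pb_inj pa2_inj pb2_inj tauAB tauAB2 tauA
  x y x2 y2 eq_tau_x eq_side_x eq_tau_y eq_side_y eq_D eq_xy eq_adj k.
have port_adj i j : eB (pb i) (pb j) = eA (pa i) (pa j).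
  by rewrite (tau1_eq_port_adj pa_inj pb_inj (tauAB i)).
have port_adj2 i j : eB2 (pb2 i) (pb2 j) = eA2 (pa2 i) (pa2 j).
  by rewrite (tau1_eq_port_adj pa2_inj pb2_inj (tauAB2 i)).
apply/eqP; rewrite -eqz_nat; apply/eqP.
rewrite (nwalks_eval srgA srgB pa_inj pb_inj port_adj).
rewrite (nwalks_eval srgA2 srgB2 pa2_inj pb2_inj port_adj2).
rewrite (walk_comb_transfer d lam mu pa_inj pb_inj pa2_inj pb2_inj tauA k eq_tau_y eq_side_y).
apply: eq_bigr => q _.
by rewrite (chi_transfer (srg_sym srgA) (srg_sym srgB) (srg_sym srgA2) (srg_sym srgB2)
  pa_inj pb_inj pa2_inj pb2_inj _ eq_tau_x eq_side_x eq_xy eq_D eq_adj).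
Qed.

Definition sw (VA VB : finType) m (v : gvert VA VB m) : gvert VB VA m :=
  match v with
  | vA a => vB a
  | vB b => vA b
  | vC i => vC i
  | inr p => inr p
  end.

Lemma swK (VA VB : finType) m : cancel (@sw VA VB m) (@sw VB VA m).
Proof. by case=> [[[a|b]|i]|p]. Qed.

Lemma sw_bij (VA VB : finType) m : bijective (@sw VA VB m).
Proof. by exists (@sw VB VA m); apply: swK. Qed.

Lemma gadj_sw (VA VB : finType) m eA eB (pa : 'I_m -> VA) (pb : 'I_m -> VB) u v :
  gadj eB eA pb pa (sw u) (sw v) = gadj eA eB pa pb u v.
Proof. by case: u => [[[a|b]|i]|[i h]]; case: v => [[[a'|b']|j]|[j h']]. Qed.

Lemma gtau_sw (VA VB : finType) m eA eB (pa : 'I_m -> VA) (pb : 'I_m -> VB) :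
  (forall i, tau1 eA pa (pa i) = tau1 eB pb (pb i)) ->
  forall v, gtau eB eA pb pa (sw v) = gtau eA eB pa pb v.
Proof. by move=> tauAB [[[a|b]|i]|[i h]] //=; rewrite tauAB. Qed.

Lemma Dpart_sw (VA VB : finType) m (u v : gvert VA VB m) : Dpart (sw u) (sw v) = Dpart u v.
Proof. by case: u => [[[a|b]|i]|[i h]]; case: v => [[[a'|b']|j]|[j h']]. Qed.

Lemma side_align (VA VB VA2 VB2 : finType) m eA eB (pa : 'I_m -> VA) (pb : 'I_m -> VB)
    eA2 eB2 (pa2 : 'I_m -> VA2) (pb2 : 'I_m -> VB2) x y x2 y2 :
  gtau eA eB pa pb x = gtau eA2 eB2 pa2 pb2 x2 -> Dpart x y = Dpart x2 y2 ->
  gtau eA eB pa pb y = gtau eA2 eB2 pa2 pb2 y2 ->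
  side x = side x2 /\ side y = side y2 \/ side x = side (sw x2) /\ side y = side (sw y2).
Proof.
case: x => [[[a|a]|i]|[i h]]; case: x2 => [[[a2|a2]|j]|[j h']] //;
case: y => [[[u|u]|k]|[k hk]]; case: y2 => [[[u2|u2]|k2]|[k2 hk2]] //; by [left | right].
Qed.

Theorem claim2
  (n d lam mu m : nat)
  (VA VB : finType) (eA : rel VA) (eB : rel VB) (pa : 'I_m -> VA) (pb : 'I_m -> VB)
  (VA2 VB2 : finType) (eA2 : rel VA2) (eB2 : rel VB2)
  (pa2 : 'I_m -> VA2) (pb2 : 'I_m -> VB2)
  (hA : srg eA n d lam mu) (hB : srg eB n d lam mu)
  (hA2 : srg eA2 n d lam mu) (hB2 : srg eB2 n d lam mu)
  (ipa : injective pa) (ipb : injective pb)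
  (ipa2 : injective pa2) (ipb2 : injective pb2)
  (htau : forall i, tau1 eA pa (pa i) = tau1 eB pb (pb i))
  (htau2 : forall i, tau1 eA2 pa2 (pa2 i) = tau1 eB2 pb2 (pb2 i))
  (htauA : forall i, tau1 eA pa (pa i) = tau1 eA2 pa2 (pa2 i))
  (x y : gvert VA VB m) (x2 y2 : gvert VA2 VB2 m)
  (heta : [/\ gtau eA eB pa pb x = gtau eA2 eB2 pa2 pb2 x2,
              Dpart x y = Dpart x2 y2,
              (x == y) = (x2 == y2),
              gadj eA eB pa pb x y = gadj eA2 eB2 pa2 pb2 x2 y2
            & gtau eA eB pa pb y = gtau eA2 eB2 pa2 pb2 y2]) :
  forall k, nwalks (gadj eA eB pa pb) k x y = nwalks (gadj eA2 eB2 pa2 pb2) k x2 y2.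
Proof.
have [tau_x eq_D eq_xy eq_adj tau_y] := heta.
have [[side_x side_y]|[side_x side_y]] := side_align tau_x eq_D tau_y.
  exact: (nwalks_transfer_aligned hA hB hA2 hB2 ipa ipb ipa2 ipb2 htau htau2 htauA).
move=> k; rewrite -(nwalks_bij (sw_bij VA2 VB2 m) (gadj_sw eA2 eB2 pa2 pb2)).
have htau2_sw i : tau1 eB2 pb2 (pb2 i) = tau1 eA2 pa2 (pa2 i) by rewrite htau2.
have htauA_sw i : tau1 eA pa (pa i) = tau1 eB2 pb2 (pb2 i) by rewrite htauA htau2.
apply: (nwalks_transfer_aligned hA hB hB2 hA2 ipa ipb ipb2 ipa2 htau htau2_sw htauA_sw) => //.
- by rewrite gtau_sw.
- by rewrite gtau_sw.
- by rewrite Dpart_sw.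
- by rewrite (inj_eq (bij_inj (sw_bij VA2 VB2 m))).
- by rewrite gadj_sw.
Qed.
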